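(* Let $\rho>1$. Then: (i) $0<\kappa^c_\rho(1)<1$; more precisely, if $1<\rho\le2$ then $\kappa^c_\rho(1)=\frac{2\sqrt\rho}{1+\rho}$, while if $\rho\ge2$ then $\kappa^c_\rho(1)=\frac{\sqrt{4+\rho^2}}{1+\rho}$. (ii) $0<\kappa^c_\rho<1$. (iii) There exists $\rho_0>2$ such that if $\rho\le\rho_0$ then $\kappa^c_\rho=\kappa^c_\rho(1)$. Consequently, if $1<\rho\le2$ then $\kappa^c_\rho=\frac{2\sqrt\rho}{1+\rho}$, while if $2\le\rho\le\rho_0$ then $\kappa^c_\rho=\frac{\sqrt{4+\rho^2}}{1+\rho}$.
   Context: Fix $\rho>1$ and an integer $k\ge1$. Set $r_1=r_{k+1}=1+\rho$ and $r_i=2$ for $2\le i\le k$. For $(a_i)_{2\le i\le k+1}\in[0,1)^k$ define $d_1=1+\rho$ and, for $2\le i\le k+1$, $d_i>0$ by $d_i^2=d_{i-1}^2+2r_ia_id_{i-1}+r_i^2$; write $\mathcal D(a_2,\dots,a_{k+1})=d_{k+1}$. Set $$\kappa^c_\rho(k)=\inf_{0\le a_2,\dots,a_{k+1}<1}\max\left(\left(\frac{4\rho}{(1+\rho)^2\sqrt{\prod_{2\le i\le k+1}(1-a_i^2)}}\right)^{\frac1{k+1}},\ \frac{2\rho}{\mathcal D(a_2,\dots,a_{k+1})}\right),$$ and $\kappa^c_\rho=\inf_{k\ge1}\kappa^c_\rho(k)$. *)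

From HB Require Import structures.
From mathcomp Require Import all_boot all_order all_algebra.
From mathcomp Require Import all_classical all_reals.
From mathcomp Require Import exp.
Set Implicit Arguments. Unset Strict Implicit. Unset Printing Implicit Defensive.
Import Order.TTheory GRing.Theory Num.Theory.
Local Open Scope ring_scope.
Local Open Scope classical_set_scope.

Section Kappa.
Variable R : realType.

Definition rad (rho : R) (k i : nat) : R :=
  if (i == 1)%N || (i == k.+1)%N then 1 + rho else 2.

(* dseq rho k a j = d_{j+1}:  d_1 = 1+rho,
   d_i = sqrt(d_{i-1}^2 + 2 r_i a_i d_{i-1} + r_i^2) (positive root) *)
Fixpoint dseq (rho : R) (k : nat) (a : nat -> R) (j : nat) : R :=
  match j with
  | 0 => 1 + rho
  | j'.+1 =>
      let i := j'.+2 in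
      let d := dseq rho k a j' in
      Num.sqrt (d ^+ 2 + 2 * rad rho k i * a i * d + rad rho k i ^+ 2)
  end.

Definition Dfun (rho : R) (k : nat) (a : nat -> R) : R := dseq rho k a k.

Definition admissible (k : nat) (a : nat -> R) : Prop :=
  forall i : nat, (2 <= i <= k.+1)%N -> 0 <= a i /\ a i < 1.

Definition kobj (rho : R) (k : nat) (a : nat -> R) : R :=
  Num.max
    (powR (4 * rho / ((1 + rho) ^+ 2 *
             Num.sqrt (\prod_(2 <= i < k.+2) (1 - a i ^+ 2))))
          (k.+1%:R)^-1)
    (2 * rho / Dfun rho k a).

Definition kappa_k (rho : R) (k : nat) : R :=
  inf [set v | exists a : nat -> R, admissible k a /\ v = kobj rho k a].

Definition kappa (rho : R) : R :=
  inf [set v | exists k : nat, (1 <= k)%N /\ v = kappa_k rho k].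

End Kappa.

(* Every admissible product lies in (0, 1], so the first term of the maximum is
   at least c^(1/(k+1)) with c = 4 rho / (1 + rho)^2 <= 1; this gives the
   universal lower bound sqrt c = 2 sqrt rho / (1 + rho), attained for k = 1 at
   a_2 = 0 as long as rho <= 2.  For k = 1 and rho >= 2 the first term grows and
   the second decreases in a_2, and they cross at a_2 = (rho^2 - 4)/(rho^2 + 4),
   where both equal sqrt (4 + rho^2) / (1 + rho).  For k >= 2 the first term is
   at least c^(1/3), which beats that value up to rho = 5/2, so rho0 = 5/2. *)
From Pilot Require Import Defs.
From HB Require Import structures.
From mathcomp Require Import all_boot all_order all_algebra.
From mathcomp Require Import all_classical all_reals.
From mathcomp Require Import exp.
From mathcomp Require Import ring lra.
Set Implicit Arguments.
Unset Strict Implicit.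
Import Order.TTheory GRing.Theory Num.Theory.
Local Open Scope ring_scope.

Section RealClosedFacts.
Variable R : rcfType.
Implicit Types u v x y : R.

Lemma ler_of_sqr u v : 0 <= v -> u ^+ 2 <= v ^+ 2 -> u <= v.
Proof. by move=> v0 le_sqr; nra. Qed.

Lemma sqrtr_eq x y : 0 <= y -> y ^+ 2 = x -> Num.sqrt x = y.
Proof. by move=> y0 <-; rewrite sqrtr_sqr ger0_norm. Qed.

Lemma ler_pdiv_cross u v x y : 0 < v -> 0 < y -> u * y <= x * v -> u / v <= x / y.
Proof. by move=> v0 y0 le_uyxv; rewrite ler_pdivrMr // mulrAC ler_pdivlMr. Qed.

End RealClosedFacts.

Lemma inf_eq_min (R : realType) (E : set R) v : E v -> lbound E v -> inf E = v.
Proof.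
move=> Ev lbv; apply/le_anti/andP; split; first exact: (ge_inf (ex_intro _ v lbv)).
by apply: lb_le_inf => //; exists v.
Qed.

Section Kappa.
Variable R : realType.
Implicit Types (rho y : R) (a : nat -> R).

Definition crho rho : R := 4 * rho / (1 + rho) ^+ 2.
Definition kappa_small rho : R := 2 * Num.sqrt rho / (1 + rho).
Definition kappa_large rho : R := Num.sqrt (4 + rho ^+ 2) / (1 + rho).

Lemma crho_in01 rho : 1 < rho -> 0 < crho rho <= 1.
Proof.
move=> rho1; have sq0 : 0 < (1 + rho) ^+ 2 by nra.
by rewrite divr_gt0 ?ler_pdivrMr //=; nra.
Qed.

Lemma prod_admissible_in01 k a : admissible k a ->
  0 < \prod_(2 <= i < k.+2) (1 - a i ^+ 2) <= 1.
Proof.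
move=> adm; rewrite big_nat_cond; apply/andP; split.
  apply: prodr_gt0 => i /andP[/andP[i2 ik] _].
  by have [a0 a1] := adm i ltac:(by rewrite i2 -ltnS ik); nra.
apply: prodr_ile1 => i /andP[/andP[i2 ik] _].
by have [a0 a1] := adm i ltac:(by rewrite i2 -ltnS ik); apply/andP; split; nra.
Qed.

Lemma kobj_ge_root rho k m a : 1 < rho -> (0 < m <= k.+1)%N -> admissible k a ->
  powR (crho rho) m%:R^-1 <= kobj rho k a.
Proof.
move=> rho1 /andP[m0 mk] adm; have /andP[c0 c1] := crho_in01 rho1.
apply: (@le_trans _ _ (powR (crho rho) (k.+1%:R)^-1)).
  by apply: ger_powR; rewrite ?c0 // lef_pV2 ?posrE ?ltr0n // ler_nat.
rewrite /kobj le_max; apply/orP; left.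
have /andP[P0 P1] := prod_admissible_in01 adm.
set P := \prod_(_ <= _ < _) _ in P0 P1 *.
have sP0 : 0 < Num.sqrt P by rewrite sqrtr_gt0.
have sP1 : Num.sqrt P <= 1 by rewrite -sqrtr1 ler_sqrt.
have sq0 : 0 < (1 + rho) ^+ 2 by nra.
apply: ge0_ler_powR; rewrite ?nnegrE ?invr_ge0 ?ler0n ?(ltW c0) //.
  by rewrite divr_ge0 ?mulr_ge0 ?(ltW sP0) ?(ltW sq0) //; lra.
have rho4 : 0 < 4 * rho by lra.
rewrite /crho ler_pdiv_cross ?(mulr_gt0 sq0 sP0) //.
by rewrite ler_pM2l // ler_piMr // ltW.
Qed.

Lemma sqrt_crho rho : 0 <= rho -> Num.sqrt (crho rho) = kappa_small rho.
Proof.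
move=> rho0; apply: sqrtr_eq.
  by rewrite divr_ge0 ?mulr_ge0 ?sqrtr_ge0 //; lra.
by rewrite expr_div_n exprMn sqr_sqrtr /crho; [congr (_ / _); ring | lra].
Qed.

Lemma kobj_ge_small rho k a : 1 < rho -> (1 <= k)%N -> admissible k a ->
  kappa_small rho <= kobj rho k a.
Proof.
move=> rho1 k1 adm; have /andP[c0 _] := crho_in01 rho1.
rewrite -sqrt_crho; last lra.
by rewrite -powR12_sqrt ?(ltW c0) // (kobj_ge_root (m := 2)).
Qed.

Lemma kappa_large_ge0 rho : 0 <= rho -> 0 <= kappa_large rho.
Proof. by move=> rho0; rewrite divr_ge0 ?sqrtr_ge0 //; lra. Qed.

Lemma sqr_sqrt_large rho : Num.sqrt (4 + rho ^+ 2) ^+ 2 = 4 + rho ^+ 2.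
Proof. by rewrite sqr_sqrtr // addr_ge0 ?sqr_ge0. Qed.

Lemma cube_large_le rho : 2 <= rho -> 2 * rho <= 5 ->
  (4 + rho ^+ 2) ^+ 3 <= (4 * rho * (1 + rho)) ^+ 2.
Proof.
move=> rho2 rho5; rewrite -subr_ge0; set t := rho - 2.
have t0 : 0 <= t by rewrite /t; lra.
have t1 : 2 * t <= 1 by rewrite /t; lra.
have -> : (4 * rho * (1 + rho)) ^+ 2 - (4 + rho ^+ 2) ^+ 3 =
    64 + 192 * t + 16 * t ^+ 2 - 96 * t ^+ 3 - 56 * t ^+ 4 - 12 * t ^+ 5 - t ^+ 6.
  by rewrite /t; ring.
have t2 : t ^+ 2 <= t by nra.
have t3 : t ^+ 3 <= t by nra.
have t4 : t ^+ 4 <= t by nra.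
have t5 : t ^+ 5 <= t by nra.
have t6 : t ^+ 6 <= t by nra.
nra.
Qed.

Lemma kappa_large_le_cube_root rho : 2 <= rho -> 2 * rho <= 5 ->
  kappa_large rho <= powR (crho rho) 3^-1.
Proof.
move=> rho2 rho5; have r0 : 0 < 1 + rho by lra.
have /andP[c0 _] := @crho_in01 rho ltac:(lra).
have V0 : 0 <= kappa_large rho by apply: kappa_large_ge0; lra.
have -> : kappa_large rho = powR (kappa_large rho ^+ 3) 3^-1.
  by rewrite -powR_mulrn // -powRrM mulfV ?powRr1 // pnatr_eq0.
apply: ge0_ler_powR; rewrite ?nnegrE ?invr_ge0 ?ler0n ?exprn_ge0 ?(ltW c0) //.
rewrite /kappa_large expr_div_n /crho ler_pdivrMr ?exprn_gt0 //.
have -> : 4 * rho / (1 + rho) ^+ 2 * (1 + rho) ^+ 3 = 4 * rho * (1 + rho).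
  by field; rewrite gt_eqF.
apply: ler_of_sqr; first nra.
by rewrite -exprM mulnC exprM sqr_sqrt_large cube_large_le.
Qed.

Lemma kobj_ge_large rho k a : 2 <= rho -> 2 * rho <= 5 -> (2 <= k)%N ->
  admissible k a -> kappa_large rho <= kobj rho k a.
Proof.
move=> rho2 rho5 k2 adm; apply: le_trans (kappa_large_le_cube_root rho2 rho5) _.
by rewrite (kobj_ge_root (m := 3)) //; lra.
Qed.

Definition prod_term rho y : R :=
  Num.sqrt (4 * rho / ((1 + rho) ^+ 2 * Num.sqrt (1 - y ^+ 2))).
Definition dist_term rho y : R :=
  2 * rho / Num.sqrt (2 * (1 + rho) ^+ 2 * (1 + y)).

Lemma kobj1E rho a : 0 <= rho ->
  kobj rho 1 a = Num.max (prod_term rho (a 2%N)) (dist_term rho (a 2%N)).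
Proof.
move=> rho0; rewrite /kobj /Dfun /= big_nat1 /Defs.rad /= powR12_sqrt; last first.
  by rewrite divr_ge0 ?mulr_ge0 ?sqrtr_ge0 //; nra.
by congr (Num.max _ (_ / Num.sqrt _)); ring.
Qed.

Lemma dist_term_antitone rho y z : 0 < rho -> 0 <= y <= z ->
  dist_term rho z <= dist_term rho y.
Proof.
move=> rho0 /andP[y0 yz]; have A0 : 0 < 2 * (1 + rho) ^+ 2.
  by rewrite mulr_gt0 // exprn_gt0 //; lra.
have Ay : 0 < 2 * (1 + rho) ^+ 2 * (1 + y) by rewrite mulr_gt0 //; lra.
have Az : 0 < 2 * (1 + rho) ^+ 2 * (1 + z) by rewrite mulr_gt0 //; lra.
rewrite /dist_term ler_wpM2l ?mulr_ge0 ?(ltW rho0) // lef_pV2 ?posrE ?sqrtr_gt0 //.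
by rewrite ler_sqrt ?(ltW Az) // ler_pM2l // lerD2l.
Qed.

Lemma prod_term_monotone rho y z : 0 < rho -> 0 <= y <= z -> z < 1 ->
  prod_term rho y <= prod_term rho z.
Proof.
move=> rho0 /andP[y0 yz] z1; have B0 : 0 < (1 + rho) ^+ 2 by rewrite exprn_gt0 //; lra.
have sz : 0 < Num.sqrt (1 - z ^+ 2) by rewrite sqrtr_gt0; nra.
have sy : 0 < Num.sqrt (1 - y ^+ 2) by rewrite sqrtr_gt0; nra.
rewrite /prod_term ler_sqrt; last by rewrite divr_ge0 ?mulr_ge0 ?ltW //; lra.
apply: ler_wpM2l; first lra.
rewrite lef_pV2 ?posrE ?(mulr_gt0 B0 sy) ?(mulr_gt0 B0 sz) // ler_pM2l //.
by rewrite ler_sqrt; nra.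
Qed.

Definition astar rho : R := (rho ^+ 2 - 4) / (rho ^+ 2 + 4).

Lemma prod_term_astar rho : 0 < rho -> prod_term rho (astar rho) = kappa_large rho.
Proof.
move=> rho0; have d0 : 0 < rho ^+ 2 + 4 by nra.
have sa : Num.sqrt (1 - astar rho ^+ 2) = 4 * rho / (rho ^+ 2 + 4).
  apply: sqrtr_eq; first by apply: divr_ge0; nra.
  by rewrite /astar !expr_div_n; field; rewrite gt_eqF.
rewrite /prod_term sa; apply: sqrtr_eq; first exact/kappa_large_ge0/ltW.
rewrite /kappa_large expr_div_n sqr_sqrt_large; field.
by rewrite !gt_eqF //; lra.
Qed.

Lemma dist_term_astar rho : 0 < rho -> dist_term rho (astar rho) = kappa_large rho.
Proof.
move=> rho0; have d0 : 0 < rho ^+ 2 + 4 by nra.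
have s0 : 0 < Num.sqrt (4 + rho ^+ 2) by rewrite sqrtr_gt0; nra.
rewrite /dist_term; have -> : Num.sqrt (2 * (1 + rho) ^+ 2 * (1 + astar rho)) =
    2 * rho * (1 + rho) / Num.sqrt (4 + rho ^+ 2).
  apply: sqrtr_eq; first by rewrite divr_ge0 ?(ltW s0) //; nra.
  by rewrite expr_div_n sqr_sqrt_large /astar; field; rewrite !gt_eqF //; nra.
by rewrite /kappa_large; field; rewrite !gt_eqF //; lra.
Qed.

Lemma astar_in01 rho : 2 <= rho -> 0 <= astar rho < 1.
Proof.
move=> rho2; have d0 : 0 < rho ^+ 2 + 4 by nra.
by rewrite divr_ge0 ?ltr_pdivrMr //=; nra.
Qed.

Lemma kobj1_ge_large rho a : 2 <= rho -> admissible 1 a ->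
  kappa_large rho <= kobj rho 1 a.
Proof.
move=> rho2 adm; have [a0 a1] := adm 2%N erefl; have rho0 : 0 < rho by lra.
rewrite kobj1E ?le_max; last lra.
have /andP[s0 _] := astar_in01 rho2.
case: (leP (a 2%N) (astar rho)) => [le_a | /ltW le_a].
  by rewrite -(dist_term_astar rho0) dist_term_antitone ?orbT ?a0.
by rewrite -(prod_term_astar rho0) prod_term_monotone ?s0.
Qed.

Lemma prod_term0 rho : 0 <= rho -> prod_term rho 0 = kappa_small rho.
Proof. by move=> rho0; rewrite /prod_term expr0n subr0 sqrtr1 mulr1 -sqrt_crho. Qed.

Lemma dist_term0_le_small rho : 0 <= rho <= 2 -> dist_term rho 0 <= kappa_small rho.
Proof.
move=> /andP[rho0 rho2]; have r0 : 0 < 1 + rho by lra.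
have D0 : 0 < 2 * (1 + rho) ^+ 2 by nra.
rewrite /dist_term /kappa_small addr0 mulr1 ler_pdiv_cross ?sqrtr_gt0 //.
apply: ler_of_sqr; first by rewrite !mulr_ge0 ?sqrtr_ge0 ?ltW.
rewrite !exprMn !sqr_sqrtr ?(ltW D0) //.
have : 0 <= (2 - rho) * rho * (1 + rho) ^+ 2.
  by apply: mulr_ge0; [apply: mulr_ge0; lra | exact: sqr_ge0].
by nra.
Qed.

Lemma admissible_cst k (c : R) : 0 <= c < 1 -> admissible k (fun=> c).
Proof. by move=> /andP[c0 c1] i _. Qed.

Lemma kappa_k_ge rho k v : (forall a, admissible k a -> v <= kobj rho k a) ->
  v <= kappa_k rho k.
Proof.
move=> lb; apply: lb_le_inf => [|_ [a [adm ->]]]; last exact: lb.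
exists (kobj rho k (fun=> 0)), (fun=> 0).
by split=> //; apply: admissible_cst; rewrite lexx ltr01.
Qed.

Lemma kappa_kE rho k a : admissible k a ->
  (forall b, admissible k b -> kobj rho k a <= kobj rho k b) ->
  kappa_k rho k = kobj rho k a.
Proof.
by move=> adm min_a; apply: inf_eq_min => [|_ [b [admb ->]]]; [exists a | exact: min_a].
Qed.

Lemma kappa_k_ge_small rho k : 1 < rho -> (1 <= k)%N -> kappa_small rho <= kappa_k rho k.
Proof. by move=> rho1 k1; apply: kappa_k_ge => a; apply: kobj_ge_small. Qed.

Lemma kappa_ge rho v : (forall k, (1 <= k)%N -> v <= kappa_k rho k) -> v <= kappa rho.
Proof.
move=> lb; apply: lb_le_inf => [|_ [k [k1 ->]]]; last exact: lb.
by exists (kappa_k rho 1), 1%N.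
Qed.

Lemma kappa_le_kappa_k rho k : 1 < rho -> (1 <= k)%N -> kappa rho <= kappa_k rho k.
Proof.
move=> rho1 k1; apply: ge_inf; last by exists k.
by exists (kappa_small rho) => _ [j [j1 ->]]; apply: kappa_k_ge_small.
Qed.

Lemma kappa_k1_small rho : 1 < rho -> rho <= 2 -> kappa_k rho 1 = kappa_small rho.
Proof.
move=> rho1 rho2; have rho0 : 0 <= rho by lra.
have kobj0 : kobj rho 1 (fun=> 0) = kappa_small rho.
  by rewrite kobj1E // prod_term0 // max_l // dist_term0_le_small ?rho0.
rewrite -kobj0; apply: kappa_kE => [|b admb]; last by rewrite kobj0 kobj_ge_small.
by apply: admissible_cst; rewrite lexx ltr01.
Qed.

Lemma kappa_k1_large rho : 2 <= rho -> kappa_k rho 1 = kappa_large rho.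
Proof.
move=> rho2; have rho0 : 0 < rho by lra.
have kobj_astar : kobj rho 1 (fun=> astar rho) = kappa_large rho.
  by rewrite kobj1E ?prod_term_astar ?dist_term_astar ?maxxx //; lra.
rewrite -kobj_astar; apply: kappa_kE => [|b admb]; last by rewrite kobj_astar kobj1_ge_large.
exact/admissible_cst/astar_in01.
Qed.

Lemma kappa_small_in01 rho : 1 < rho -> 0 < kappa_small rho < 1.
Proof.
move=> rho1; have s1 : 1 < Num.sqrt rho by rewrite -sqrtr1 ltr_sqrt //; lra.
have ss : Num.sqrt rho ^+ 2 = rho by rewrite sqr_sqrtr //; lra.
by rewrite divr_gt0 ?ltr_pdivrMr //=; nra.
Qed.

Lemma kappa_large_in01 rho : 3 < 2 * rho -> 0 < kappa_large rho < 1.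
Proof.
move=> rho3; have s0 : 0 < Num.sqrt (4 + rho ^+ 2) by rewrite sqrtr_gt0; nra.
have := sqr_sqrt_large rho.
by rewrite divr_gt0 ?ltr_pdivrMr //=; nra.
Qed.

Lemma kappa_k1_in01 rho : 1 < rho -> 0 < kappa_k rho 1 < 1.
Proof.
move=> rho1; case: (leP rho 2) => [rho2 | /ltW rho2].
  by rewrite kappa_k1_small // kappa_small_in01.
by rewrite kappa_k1_large // kappa_large_in01 //; lra.
Qed.

Lemma kappa_in01 rho : 1 < rho -> 0 < kappa rho < 1.
Proof.
move=> rho1; have /andP[ks0 _] := kappa_small_in01 rho1.
have /andP[_ k1] := kappa_k1_in01 rho1.
rewrite (lt_le_trans ks0) ?(le_lt_trans (kappa_le_kappa_k rho1 (leqnn 1))) //.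
by apply: kappa_ge => k; apply: kappa_k_ge_small.
Qed.

Lemma kappa_eq_kappa_k1 rho : 1 < rho -> 2 * rho <= 5 -> kappa rho = kappa_k rho 1.
Proof.
move=> rho1 rho5; apply/le_anti; rewrite kappa_le_kappa_k //=.
apply: kappa_ge => k k1; case: (leP rho 2) => [rho2 | /ltW rho2].
  by rewrite kappa_k1_small // kappa_k_ge_small.
rewrite kappa_k1_large //; case: k k1 => [|[|k]] // _; first by rewrite kappa_k1_large.
by apply: kappa_k_ge => a; apply: kobj_ge_large.
Qed.

End Kappa.

Theorem lemma2p1 (R : realType) :
  (forall rho : R, 1 < rho ->
     (0 < kappa_k rho 1 /\ kappa_k rho 1 < 1) /\
     (rho <= 2 -> kappa_k rho 1 = 2 * Num.sqrt rho / (1 + rho)) /\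
     (2 <= rho -> kappa_k rho 1 = Num.sqrt (4 + rho ^+ 2) / (1 + rho)) /\
     (0 < kappa rho /\ kappa rho < 1)) /\
  (exists rho0 : R, 2 < rho0 /\
     forall rho : R, 1 < rho -> rho <= rho0 ->
       kappa rho = kappa_k rho 1 /\
       (rho <= 2 -> kappa rho = 2 * Num.sqrt rho / (1 + rho)) /\
       (2 <= rho -> kappa rho = Num.sqrt (4 + rho ^+ 2) / (1 + rho))).
Proof.
split=> [rho rho1 | ].
  have /andP[k0 k1] := kappa_k1_in01 rho1; have /andP[c0 c1] := kappa_in01 rho1.
  split=> //; split; first exact: kappa_k1_small.
  by split=> //; exact: kappa_k1_large.
exists (5 / 2); split=> [|rho rho1 rho5]; first lra.
have kappaE : kappa rho = kappa_k rho 1 by apply: kappa_eq_kappa_k1; lra.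
rewrite kappaE; split=> //; split; first exact: kappa_k1_small.
exact: kappa_k1_large.
Qed.
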